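(* Let $S$ be a finite semigroup and let $I$ be an ideal of $S$ (possibly $I=\varnothing$). Then $$\mathbf{Sub}(S)=\big\{\langle (U\setminus\{0\})\cup L \rangle \;\big|\; U\in \mathbf{Sub}(S/I),\ L\in\mathbf{Sub}(I)\big\},$$ where for each $U\in\mathbf{Sub}(S/I)$ the set $U\setminus\{0\}$ is regarded as a subset of $S\setminus I\subseteq S$, and the generated subsemigroup $\langle\cdot\rangle$ is taken in $S$.
   Context: For a semigroup $X$, $\mathbf{Sub}(X)$ denotes the set of all subsemigroups of $X$, where the empty set is considered a subsemigroup (so $\varnothing\in\mathbf{Sub}(X)$). For $A\subseteq S$, $\langle A\rangle$ denotes the least subsemigroup of $S$ containing $A$ (so $\langle\varnothing\rangle=\varnothing$). For an ideal $I$ of $S$, the Rees factor semigroup $S/I$ has elements $(S\setminus I)\cup\{0\}$, where $0$ is a new symbol not in $S$, with multiplication $s\cdot t=st$ if $s,t,st\in S\setminus I$, and $s\cdot t=0$ otherwise (in particular $S/\varnothing\cong S^0$, $S$ with a zero adjoined). A subsemigroup of $S/I$ need not contain $0$. *)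

(* A finite semigroup is a finType T with an associative
   binary operation op (associativity is a hypothesis of the theorem). *)
From mathcomp Require Import all_boot.
Set Implicit Arguments. Unset Strict Implicit. Unset Printing Implicit Defensive.

Section Semigroup.
Variables (T : finType) (op : T -> T -> T).

Definition is_subsemigroup (A : {set T}) : Prop :=
  forall x y, x \in A -> y \in A -> op x y \in A.

(* Least subsemigroup containing A: intersection of all subsemigroups
   containing A (so gen set0 = set0). *)
Definition gen (A : {set T}) : {set T} :=
  \bigcap_(B : {set T} | [forall x, forall y,
       (x \in B) ==> (y \in B) ==> (op x y \in B)] && (A \subset B)) B.

Definition is_ideal (I : {set T}) : Prop :=
  forall s x, x \in I -> op s x \in I /\ op x s \in I.

(* Rees factor S/I: carrier (S \ I) ∪ {0}, modelled inside option T,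
   with None = the new zero and Some s (s \notin I) = s. *)
Definition rees_carrier (I : {set T}) : {set option T} :=
  None |: [set Some s | s in ~: I].

Definition rees_op (I : {set T}) (u v : option T) : option T :=
  match u, v with
  | Some s, Some t =>
      if (s \notin I) && (t \notin I) && (op s t \notin I)
      then Some (op s t) else None
  | _, _ => None
  end.

Definition is_rees_subsemigroup (I : {set T}) (U : {set option T}) : Prop :=
  U \subset rees_carrier I /\
  forall u v, u \in U -> v \in U -> rees_op I u v \in U.

Definition rees_strip (U : {set option T}) : {set T} :=
  [set s | Some s \in U].

End Semigroup.

From mathcomp Require Import all_boot.

(* Every subsemigroup A of S splits as (A \ I) ∪ (A ∩ I).  The part A ∩ I is a
   subsemigroup of I, and A \ I together with the zero is a subsemigroup of S/I
   (products of A that fall into I become 0), so A = <(U \ {0}) ∪ L> for these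
   U and L.  Conversely a generated subsemigroup is a subsemigroup. *)

Set Implicit Arguments. Unset Strict Implicit. Unset Printing Implicit Defensive.

Section Subsemigroups.
Variables (T : finType) (op : T -> T -> T).

Lemma gen_subsemigroup (A : {set T}) : is_subsemigroup op (gen op A).
Proof.
move=> x y /bigcapP genx /bigcapP geny; apply/bigcapP => B hB.
have /andP [/forallP closedB _] := hB.
by have /implyP/(_ (genx B hB))/implyP/(_ (geny B hB)) := forallP (closedB x) y.
Qed.

Lemma gen_id (A : {set T}) : is_subsemigroup op A -> gen op A = A.
Proof.
move=> closedA; apply/eqP; rewrite eqEsubset; apply/andP; split.
  apply: bigcap_inf; rewrite subxx andbT.
  by apply/'forall_forallP => x y; apply/implyP => Ax; apply/implyP; apply: closedA.
by apply/bigcapsP => B /andP [_].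
Qed.

Lemma ideal_subsemigroup (I : {set T}) : is_ideal op I -> is_subsemigroup op I.
Proof. by move=> idealI x y _ Iy; case: (idealI x y Iy). Qed.

Lemma subsemigroupI (A B : {set T}) :
  is_subsemigroup op A -> is_subsemigroup op B -> is_subsemigroup op (A :&: B).
Proof.
by move=> closedA closedB x y; rewrite !inE => /andP [Ax Bx] /andP [Ay By];
  rewrite closedA ?closedB.
Qed.

(* The image of A under the quotient map S -> S/I (when A meets I). *)
Definition rees_image (I A : {set T}) : {set option T} :=
  None |: [set Some s | s in A :\: I].

Lemma in_rees_image (I A : {set T}) s : (Some s \in rees_image I A) = (s \in A :\: I).
Proof. by rewrite /rees_image in_setU1 (mem_imset _ _ (@Some_inj _)). Qed.

Lemma rees_strip_image (I A : {set T}) : rees_strip (rees_image I A) = A :\: I.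
Proof. by apply/setP => s; rewrite inE in_rees_image. Qed.

Lemma rees_image_subsemigroup (I A : {set T}) :
  is_subsemigroup op A -> is_rees_subsemigroup op I (rees_image I A).
Proof.
move=> closedA; split.
  apply/subsetP => -[s|] As; last exact: setU11.
  move: As; rewrite in_rees_image => /setDP [_ Is].
  by rewrite /rees_carrier in_setU1 (mem_imset _ _ (@Some_inj _)) inE.
move=> [s|] [t|]; try by move=> _ _; exact: setU11.
rewrite !in_rees_image => /setDP [As Is] /setDP [At It] /=.
rewrite Is It /=; case: ifPn => [Ist|_]; last exact: setU11.
by rewrite in_rees_image inE Ist closedA.
Qed.

End Subsemigroups.

Theorem lemma4p1 (T : finType) (op : T -> T -> T)
  (op_assoc : forall x y z, op x (op y z) = op (op x y) z)
  (I : {set T}) (hI : is_ideal op I) :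
  forall A : {set T},
    is_subsemigroup op A <->
    exists (U : {set option T}) (L : {set T}),
      [/\ is_rees_subsemigroup op I U,
          is_subsemigroup op L, L \subset I &
          A = gen op (rees_strip U :|: L)].
Proof.
move=> A; split => [closedA|[U [L [_ _ _ ->]]]]; last exact: gen_subsemigroup.
exists (rees_image I A), (A :&: I); split.
- exact: rees_image_subsemigroup.
- exact: subsemigroupI (ideal_subsemigroup hI).
- exact: subsetIr.
by rewrite rees_strip_image setUC setID gen_id.
Qed.
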